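(* Let $\mathcal{A}$ be an abelian category and $n\ge1$. Suppose given objects $A^k$ ($0\le k\le n+1$) and $B_k^l$ ($0\le k\le n+1$, $1\le l\le n$), with the convention $B_k^0=A^k$, and morphisms $f^k:A^k\to A^{k+1}$ ($0\le k\le n$), $g_k^l:B_k^l\to B_k^{l-1}$ ($1\le l\le n$), $p_k^l:B_k^l\to B_{k+1}^{l+1}$ ($0\le k\le n$, $0\le l\le n-1$; write $p^k=p_k^0$), satisfying $f^k=g_{k+1}^1p^k$, $g_{k+1}^{l+1}p_k^l=p_k^{l-1}g_k^l$ for $1\le l\le n-1$, and $p_k^{n-1}g_k^n=0$. Assume: (a) the sequence $0\to B_{n+1}^n\xrightarrow{g_{n+1}^n}\cdots\xrightarrow{g_{n+1}^2}B_{n+1}^1\xrightarrow{g_{n+1}^1}A^{n+1}\to0$ is exact; (b) for every $k\in\{0,\dots,n\}$, the mapping cone of the morphism of complexes from $B_k^n\to B_k^{n-1}\to\cdots\to B_k^1\to A^k$ to $0\to B_{k+1}^n\to\cdots\to B_{k+1}^2\to B_{k+1}^1$ given by the components $0,p_k^{n-1},\dots,p_k^1,p^k$, i.e. the complex $B_k^n\to B_k^{n-1}\oplus 0\to B_k^{n-2}\oplus B_{k+1}^n\to\cdots\to A^k\oplus B_{k+1}^2\to B_{k+1}^1$, is exact at every term except possibly the last, and its first morphism is a monomorphism. Then the sequence $A^0\xrightarrow{f^0}A^1\to\cdots\xrightarrow{f^n}A^{n+1}\to0$ is exact if and only if for every $k\in\{0,\dots,n\}$ the morphism $[p^k,\ g_{k+1}^2]:A^k\oplus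 B_{k+1}^2\to B_{k+1}^1$ is an epimorphism (with $B_{k+1}^2:=0$ if $n=1$).
   Context: The mapping cone of a morphism of complexes $(h^0,\dots,h^n)$ from $X^0\xrightarrow{d_X^0}\cdots\to X^n$ to $Y^0\xrightarrow{d_Y^0}\cdots\to Y^n$ is the complex $X^0\to X^1\oplus Y^0\to\cdots\to X^n\oplus Y^{n-1}\to Y^n$ with differentials $\begin{pmatrix}-d_X^k&0\\ h^k&d_Y^{k-1}\end{pmatrix}$ (with $d_X^n=0$, $d_Y^{-1}=0$). *)

From mathcomp Require Import all_boot all_algebra.
Set Implicit Arguments. Unset Strict Implicit. Unset Printing Implicit Defensive.
Import GRing.Theory.
Local Open Scope ring_scope.

Record addCat := AddCat {
  obj :> Type;
  Hom : obj -> obj -> zmodType;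
  compm : forall a b c : obj, Hom b c -> Hom a b -> Hom a c;
  idm : forall a : obj, Hom a a;
  compA : forall a b c d (h : Hom c d) (g : Hom b c) (f : Hom a b),
    compm h (compm g f) = compm (compm h g) f;
  comp1m : forall a b (f : Hom a b), compm (idm b) f = f;
  compm1 : forall a b (f : Hom a b), compm f (idm a) = f;
  compDl : forall a b c (g g' : Hom b c) (f : Hom a b),
    compm (g + g') f = compm g f + compm g' f;
  compDr : forall a b c (g : Hom b c) (f f' : Hom a b),
    compm g (f + f') = compm g f + compm g f';
  zobj : obj;
  zobj_idm : idm zobj = 0;
  bip : obj -> obj -> obj;
  bin1 : forall a b, Hom a (bip a b);
  bin2 : forall a b, Hom b (bip a b);
  bpr1 : forall a b, Hom (bip a b) a;
  bpr2 : forall a b, Hom (bip a b) b;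
  bpr1in1 : forall a b, compm (bpr1 a b) (bin1 a b) = idm a;
  bpr2in2 : forall a b, compm (bpr2 a b) (bin2 a b) = idm b;
  bpr1in2 : forall a b, compm (bpr1 a b) (bin2 a b) = 0;
  bpr2in1 : forall a b, compm (bpr2 a b) (bin1 a b) = 0;
  bip_id : forall a b,
    compm (bin1 a b) (bpr1 a b) + compm (bin2 a b) (bpr2 a b) = idm (bip a b)
}.

Arguments Hom : clear implicits.
Arguments zobj : clear implicits.
Arguments compm {_ _ _ _} _ _.
Arguments idm {_} _.
Arguments bip {_} _ _.
Arguments bin1 {_ _ _}.
Arguments bin2 {_ _ _}.
Arguments bpr1 {_ _ _}.
Arguments bpr2 {_ _ _}.

Section Basic.
Variable C : addCat.

Definition mono {a b : C} (f : Hom C a b) : Prop :=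
  forall (x : C) (u v : Hom C x a), compm f u = compm f v -> u = v.

Definition epi {a b : C} (f : Hom C a b) : Prop :=
  forall (x : C) (u v : Hom C b x), compm u f = compm v f -> u = v.

Definition is_kernel {a b K : C} (f : Hom C a b) (k : Hom C K a) : Prop :=
  compm f k = 0 /\
  forall (x : C) (h : Hom C x a), compm f h = 0 ->
    exists! u : Hom C x K, compm k u = h.

Definition is_cokernel {a b Q : C} (f : Hom C a b) (q : Hom C b Q) : Prop :=
  compm q f = 0 /\
  forall (x : C) (h : Hom C b x), compm h f = 0 ->
    exists! u : Hom C Q x, compm u q = h.

Record abelian : Prop := {
  ab_ker : forall (a b : C) (f : Hom C a b), exists (K : C) (k : Hom C K a), is_kernel f k;
  ab_coker : forall (a b : C) (f : Hom C a b), exists (Q : C) (q : Hom C b Q), is_cokernel f q;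
  ab_mono : forall (a b : C) (f : Hom C a b), mono f ->
    exists (c : C) (h : Hom C b c), is_kernel h f;
  ab_epi : forall (a b : C) (f : Hom C a b), epi f ->
    exists (c : C) (h : Hom C c a), is_cokernel h f
}.

(* Exactness of a -f-> b -g-> c at b: g f = 0 and Ker g <= Im f, i.e. the
   composite  Ker g -> b -> Coker f  vanishes (Im f = Ker (Coker f)). *)
Definition exact_at {a b c : C} (f : Hom C a b) (g : Hom C b c) : Prop :=
  compm g f = 0 /\
  forall (K : C) (k : Hom C K b) (Q : C) (q : Hom C b Q),
    is_kernel g k -> is_cokernel f q -> compm q k = 0.

Inductive chain : C -> Type :=
  | cnil : forall x : C, chain x
  | ccons : forall x y : C, Hom C x y -> chain y -> chain x.

(* exactness at every term having both an incoming and an outgoing morphism *)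
Fixpoint exact_chain {x : C} (c : chain x) : Prop :=
  match c with
  | cnil _ => True
  | ccons x0 y f c' =>
      (match c' in chain y0 return Hom C x0 y0 -> Prop with
       | cnil _ => fun _ => True
       | ccons _ _ g _ => fun f' => exact_at f' g
       end) f /\ exact_chain c'
  end.

Definition tomx {x a b : C} (u : Hom C x a) (v : Hom C x b) : Hom C x (bip a b) :=
  compm bin1 u + compm bin2 v.
Definition frommx {a b y : C} (u : Hom C a y) (v : Hom C b y) : Hom C (bip a b) y :=
  compm u bpr1 + compm v bpr2.
(* the matrix [[u, v], [w, z]] *)
Definition mx2 {a b c d : C} (u : Hom C a c) (v : Hom C b c) (w : Hom C a d)
  (z : Hom C b d) : Hom C (bip a b) (bip c d) :=
  tomx (frommx u v) (frommx w z).

End Basic.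

Arguments cnil {C}.
Arguments ccons {C x y}.

Section Data.
Variable C : addCat.
(* B k l = B_k^l, with B k 0 = A^k *)
Variable B : nat -> nat -> C.
Variable f : forall k, Hom C (B k 0) (B k.+1 0).
(* g k l = g_k^{l+1} : B_k^{l+1} -> B_k^l *)
Variable g : forall k l, Hom C (B k l.+1) (B k l).
Variable p : forall k l, Hom C (B k l) (B k.+1 l.+1).

Fixpoint fchain (r k : nat) : chain (B k 0) :=
  match r with
  | 0 => ccons (0 : Hom C (B k 0) (zobj C)) (cnil (zobj C))
  | r'.+1 => ccons (f k) (fchain r' k.+1)
  end.

Fixpoint gchain (N l : nat) : chain (B N l) :=
  match l with
  | 0 => ccons (0 : Hom C (B N 0) (zobj C)) (cnil (zobj C))
  | l'.+1 => ccons (g N l') (gchain N l')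
  end.

(* tail of the k-th mapping cone:
   B_k^l + B_{k+1}^{l+2} -> ... -> A^k + B_{k+1}^2 -> B_{k+1}^1,
   differentials [[-d_X, 0], [h, d_Y]] *)
Fixpoint mchain (k l : nat) : chain (bip (B k l) (B k.+1 l.+2)) :=
  match l with
  | 0 => ccons (frommx (p k 0) (g k.+1 1)) (cnil (B k.+1 1))
  | l'.+1 => ccons (mx2 (- g k l') 0 (p k l'.+1) (g k.+1 l'.+2)) (mchain k l')
  end.

(* second summand of the term A^k (+) Y^{n-1} of the cone (n = m+1):
   Y^{n-1} = 0 if n = 1, and B_{k+1}^2 otherwise *)
Definition Ysec (k m : nat) : C :=
  match m with 0 => zobj C | _.+1 => B k.+1 2 end.

(* the last differential [p^k, g_{k+1}^2] : A^k (+) B_{k+1}^2 -> B_{k+1}^1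
   (with B_{k+1}^2 := 0 when n = 1) *)
Definition pg (k m : nat) : Hom C (bip (B k 0) (Ysec k m)) (B k.+1 1) :=
  match m as m0 return Hom C (bip (B k 0) (Ysec k m0)) (B k.+1 1) with
  | 0 => frommx (p k 0) 0
  | m'.+1 => frommx (p k 0) (g k.+1 1)
  end.

(* the part of the cone starting at C^1 = B_k^{n-1} (+) 0, n = m+1 *)
Definition cone_tail (k m : nat) : chain (bip (B k m) (zobj C)) :=
  match m as m0 return chain (bip (B k m0) (zobj C)) with
  | 0 => ccons (frommx (p k 0) 0) (cnil (B k.+1 1))
  | m'.+1 => ccons (mx2 (- g k m') 0 (p k m'.+1) 0) (mchain k m')
  end.

Definition cone_d0 (k m : nat) : Hom C (B k m.+1) (bip (B k m) (zobj C)) :=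
  tomx (- g k m) 0.

(* the whole mapping cone of the k-th morphism of complexes, n = m+1 *)
Definition cone_chain (k m : nat) : chain (B k m.+1) :=
  ccons (cone_d0 k m) (cone_tail k m).

End Data.

From Pilot Require Import Defs.
From mathcomp Require Import all_boot ssralg zify.
Set Implicit Arguments. Unset Strict Implicit. Unset Printing Implicit Defensive.
Import GRing.Theory.
Local Open Scope ring_scope.

(* The chase is done with generalized elements: a morphism y : x -> b is
   covered by h : a -> b when y, after precomposition with some epimorphism,
   factors through h.  In an abelian category h is epi iff it covers every
   y, and a -f-> b -g-> c is exact iff gf = 0 and f covers every y with gy = 0.

   Exactness of the cone at its terms B_k^l (+) B_{k+1}^{l+2} turns exactness
   of column k+1 at B_{k+1}^{l+1} into exactness of column k at B_k^l; since
   column n+1 is exact by (a) and the first cone differential is mono,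
   descending induction makes every column exact at each B_k^l, l >= 1.
   Exactness of the last cone term then shows that Ker f^{k+1} is covered by
   g_{k+1}^1, so the row is exact at A^{k+1} iff Im g_{k+1}^1 lies in Im f^k,
   and by exactness of column k+1 at B_{k+1}^1 this says exactly that
   [p^k, g_{k+1}^2] is epi. *)

Local Infix "⊚" := compm (at level 40, left associativity).

Section Additive.
Variable C : addCat.

Lemma comp0m (a b c : C) (f : Hom C a b) : (0 : Hom C b c) ⊚ f = 0.
Proof. by apply: (addrI (0 ⊚ f)); rewrite -compDl !addr0. Qed.

Lemma compm0 (a b c : C) (f : Hom C b c) : f ⊚ (0 : Hom C a b) = 0.
Proof. by apply: (addrI (f ⊚ 0)); rewrite -compDr !addr0. Qed.

Lemma compNm (a b c : C) (g : Hom C b c) (f : Hom C a b) : (- g) ⊚ f = - (g ⊚ f).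
Proof. by apply: (addrI (g ⊚ f)); rewrite -compDl !subrr comp0m. Qed.

Lemma compmN (a b c : C) (g : Hom C b c) (f : Hom C a b) : g ⊚ (- f) = - (g ⊚ f).
Proof. by apply: (addrI (g ⊚ f)); rewrite -compDr !subrr compm0. Qed.

Lemma compBl (a b c : C) (g g' : Hom C b c) (f : Hom C a b) :
  (g - g') ⊚ f = g ⊚ f - g' ⊚ f.
Proof. by rewrite compDl compNm. Qed.

Lemma compBr (a b c : C) (g : Hom C b c) (f f' : Hom C a b) :
  g ⊚ (f - f') = g ⊚ f - g ⊚ f'.
Proof. by rewrite compDr compmN. Qed.

Lemma bpr1_tomx (x a b : C) (u : Hom C x a) (v : Hom C x b) : bpr1 ⊚ tomx u v = u.
Proof. by rewrite /tomx compDr !Defs.compA bpr1in1 bpr1in2 comp1m comp0m addr0. Qed.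

Lemma frommx_bin1 (a b y : C) (u : Hom C a y) (v : Hom C b y) : frommx u v ⊚ Defs.bin1 = u.
Proof. by rewrite /frommx compDl -!Defs.compA bpr1in1 bpr2in1 compm1 compm0 addr0. Qed.

Lemma frommx_bin2 (a b y : C) (u : Hom C a y) (v : Hom C b y) : frommx u v ⊚ Defs.bin2 = v.
Proof. by rewrite /frommx compDl -!Defs.compA bpr1in2 bpr2in2 compm1 compm0 add0r. Qed.

Lemma frommx_tomx (x a b y : C) (u : Hom C a y) (v : Hom C b y)
  (s : Hom C x a) (t : Hom C x b) : frommx u v ⊚ tomx s t = u ⊚ s + v ⊚ t.
Proof. by rewrite /tomx compDr !Defs.compA frommx_bin1 frommx_bin2. Qed.

Lemma tomx_comp (w x a b : C) (u : Hom C x a) (v : Hom C x b) (h : Hom C w x) :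
  tomx u v ⊚ h = tomx (u ⊚ h) (v ⊚ h).
Proof. by rewrite /tomx compDl -!Defs.compA. Qed.

Lemma tomx_eta (x a b : C) (h : Hom C x (bip a b)) : h = tomx (bpr1 ⊚ h) (bpr2 ⊚ h).
Proof. by rewrite /tomx !Defs.compA -compDl bip_id comp1m. Qed.

Lemma frommx_comp (x a b y : C) (u : Hom C a y) (v : Hom C b y) (w : Hom C x (bip a b)) :
  frommx u v ⊚ w = u ⊚ (bpr1 ⊚ w) + v ⊚ (bpr2 ⊚ w).
Proof. by rewrite {1}[w]tomx_eta frommx_tomx. Qed.

Lemma tomx00 (x a b : C) : tomx (0 : Hom C x a) (0 : Hom C x b) = 0.
Proof. by rewrite /tomx !compm0 addr0. Qed.

Lemma mx2_tomx (x a b c d : C) (u : Hom C a c) (v : Hom C b c) (w : Hom C a d)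
  (z : Hom C b d) (s : Hom C x a) (t : Hom C x b) :
  mx2 u v w z ⊚ tomx s t = tomx (u ⊚ s + v ⊚ t) (w ⊚ s + z ⊚ t).
Proof. by rewrite /mx2 tomx_comp !frommx_tomx. Qed.

Lemma bpr1_mx2 (a b c d : C) (u : Hom C a c) (v : Hom C b c) (w : Hom C a d)
  (z : Hom C b d) : bpr1 ⊚ mx2 u v w z = frommx u v.
Proof. exact: bpr1_tomx. Qed.

Lemma mx2_tomx_eq0_ul (W U V U' V' : C) (g0 : Hom C U U') (q0 : Hom C U V')
  (h0 : Hom C V V') (g1 : Hom C W U) (t : Hom C W V) :
  mx2 (- g0) 0 q0 h0 ⊚ tomx (- g1) t = 0 -> g0 ⊚ g1 = 0.
Proof.
move/(congr1 (compm bpr1)).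
by rewrite mx2_tomx bpr1_tomx compm0 comp0m addr0 compNm compmN opprK.
Qed.

Lemma mx2_comp_eq0_ul (W1 W2 U V U' V' : C) (g0 : Hom C U U') (q0 : Hom C U V')
  (h0 : Hom C V V') (g1 : Hom C W1 U) (z1 : Hom C W2 U) (q1 : Hom C W1 V)
  (h1 : Hom C W2 V) :
  mx2 (- g0) 0 q0 h0 ⊚ mx2 (- g1) z1 q1 h1 = 0 -> g0 ⊚ g1 = 0.
Proof.
move/(congr1 (fun t => t ⊚ Defs.bin1)); rewrite comp0m -Defs.compA.
rewrite [X in _ ⊚ X]tomx_comp !frommx_bin1; exact: mx2_tomx_eq0_ul.
Qed.

Lemma monoP (a b : C) (f : Hom C a b) :
  mono f <-> forall x (y : Hom C x a), f ⊚ y = 0 -> y = 0.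
Proof.
split=> [H x y fy|H x u v fuv]; first by apply: H; rewrite fy compm0.
by apply/eqP; rewrite -subr_eq0; apply/eqP/H; rewrite compBr fuv subrr.
Qed.

Lemma epiP (a b : C) (f : Hom C a b) :
  epi f <-> forall x (u : Hom C b x), u ⊚ f = 0 -> u = 0.
Proof.
split=> [H x u uf|H x u v ufv]; first by apply: H; rewrite uf comp0m.
by apply/eqP; rewrite -subr_eq0; apply/eqP/H; rewrite compBl ufv subrr.
Qed.

Lemma epi_id (a : C) : epi (idm a).
Proof. by move=> x u v; rewrite !compm1. Qed.

Lemma epi_comp (a b c : C) (e1 : Hom C b c) (e2 : Hom C a b) :
  epi e1 -> epi e2 -> epi (e1 ⊚ e2).
Proof. by move=> H1 H2 x u v; rewrite !Defs.compA => /H2 /H1. Qed.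

Lemma mono_comp (a b c : C) (m1 : Hom C b c) (m2 : Hom C a b) :
  mono m1 -> mono m2 -> mono (m1 ⊚ m2).
Proof. by move=> H1 H2 x u v; rewrite -!Defs.compA => /H1 /H2. Qed.

Lemma ker_mono (a b K : C) (f : Hom C a b) (k : Hom C K a) : is_kernel f k -> mono k.
Proof.
case=> fk H x u v kuv.
have [w [_ U]] := H x (k ⊚ u) ltac:(by rewrite Defs.compA fk comp0m).
by rewrite -(U u erefl) (U v (esym kuv)).
Qed.

Definition covered (a b x : C) (h : Hom C a b) (y : Hom C x b) : Prop :=
  exists x' (e : Hom C x' x) (z : Hom C x' a), epi e /\ h ⊚ z = y ⊚ e.

Lemma covered_comp_epi (a b x x' : C) (h : Hom C a b) (y : Hom C x b) (e : Hom C x' x) :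
  epi e -> covered h (y ⊚ e) -> covered h y.
Proof.
move=> He [x'' [e' [z [He' E]]]]; exists x'', (e ⊚ e'), z.
by split; [exact: epi_comp | rewrite E -Defs.compA].
Qed.

Lemma covers_epi (a b : C) (h : Hom C a b) :
  (forall x (y : Hom C x b), covered h y) -> epi h.
Proof.
move=> H x u v huv; have [x' [e [z [He E]]]] := H _ (idm b).
by apply: He; rewrite -[e]comp1m -E !Defs.compA huv.
Qed.

Lemma exact_at_covered (a b c : C) (f : Hom C a b) (g : Hom C b c) :
  g ⊚ f = 0 -> (forall x (y : Hom C x b), g ⊚ y = 0 -> covered f y) -> exact_at f g.
Proof.
move=> gf H; split=> // K k Q q [gk _] [qf _].
have [x' [e [z [He E]]]] := H _ k gk.
by apply: (proj1 (epiP e) He); rewrite -Defs.compA -E Defs.compA qf comp0m.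
Qed.

Section Abelian.
Hypothesis HC : abelian C.

Lemma epi_coker_ker (a b K : C) (h : Hom C a b) (k : Hom C K a) :
  epi h -> is_kernel h k -> is_cokernel k h.
Proof.
move=> eh [hk Hk]; split=> // x t tk.
have [c0 [c [ch Hc]]] := ab_epi HC eh.
apply: Hc; have [u [ku _]] := Hk _ c ch.
by rewrite -ku Defs.compA tk comp0m.
Qed.

(* The cover of y is the pullback of h along y, built as the kernel of [h, -y]. *)
Lemma epi_covers (a b x : C) (h : Hom C a b) (y : Hom C x b) : epi h -> covered h y.
Proof.
move=> eh; have [P [k kk]] := ab_ker HC (frommx h (- y)).
exists P, (bpr2 ⊚ k), (bpr1 ⊚ k); split; last first.
  have := proj1 kk; rewrite [k]tomx_eta frommx_tomx compNm -!tomx_eta.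
  by move/eqP; rewrite subr_eq0 => /eqP.
have ehy : epi (frommx h (- y)).
  apply/epiP => z u hu; apply: (proj1 (epiP h) eh).
  by rewrite -(frommx_bin1 h (- y)) Defs.compA hu comp0m.
have [_ Hco] := epi_coker_ker ehy kk.
apply/epiP => T u Hu.
have [w [Hw _]] := Hco T (u ⊚ bpr2) ltac:(by rewrite -Defs.compA).
have w0 : w = 0.
  apply: (proj1 (epiP h) eh).
  by rewrite -(frommx_bin1 h (- y)) Defs.compA Hw -Defs.compA bpr2in1 compm0.
by rewrite -[u]compm1 -(@bpr2in2 C a x) Defs.compA -Hw w0 !comp0m.
Qed.

Lemma image_factor_epi (a b Q I : C) (f : Hom C a b) (q : Hom C b Q) (i : Hom C I b)
  (e : Hom C a I) : is_cokernel f q -> is_kernel q i -> f = i ⊚ e -> epi e.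
Proof.
move=> cq ki fe.
have [Q' [c cc]] := ab_coker HC e.
have [M [m km]] := ab_ker HC c.
have [e' [Ee' _]] := proj2 km _ e (proj1 cc).
have mim : mono (i ⊚ m) by apply: mono_comp; [exact: ker_mono ki | exact: ker_mono km].
have [c1 [h kh]] := ab_mono HC mim.
have hf : h ⊚ f = 0.
  by rewrite fe -Ee' (Defs.compA i m) Defs.compA (proj1 kh) comp0m.
have [h' [Eh' _]] := proj2 cq _ h hf.
have [w [Ew _]] := proj2 kh _ i ltac:(by rewrite -Eh' -Defs.compA (proj1 ki) compm0).
have mw : m ⊚ w = idm I by apply: (ker_mono ki); rewrite compm1 Defs.compA.
have c0 : c = 0 by rewrite -[c]compm1 -mw Defs.compA (proj1 km) comp0m.
apply/epiP => T u Hu; have [u' [Eu' _]] := proj2 cc _ u Hu.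
by rewrite -Eu' c0 compm0.
Qed.

Lemma exact_covered (a b c x : C) (f : Hom C a b) (g : Hom C b c) (y : Hom C x b) :
  exact_at f g -> g ⊚ y = 0 -> covered f y.
Proof.
case=> gf Hex gy.
have [Q [q cq]] := ab_coker HC f.
have [I [i ki]] := ab_ker HC q.
have [K [k kk]] := ab_ker HC g.
have [u [Eu _]] := proj2 kk _ y gy.
have qy : q ⊚ y = 0 by rewrite -Eu Defs.compA (Hex _ _ _ _ kk cq) comp0m.
have [v [Ev _]] := proj2 ki _ y qy.
have [e [Ee _]] := proj2 ki _ f (proj1 cq).
have [x' [e' [z [He' E]]]] := epi_covers v (image_factor_epi cq ki (esym Ee)).
exists x', e', z; split=> //.
by rewrite -Ee -Defs.compA E Defs.compA Ev.
Qed.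

Lemma exact_tomx_covered (W U V Z x : C) (g : Hom C W U) (d : Hom C (bip U V) Z)
  (a : Hom C x U) (b : Hom C x V) :
  exact_at (tomx (- g) (0 : Hom C W V)) d -> d ⊚ tomx a b = 0 -> covered g a.
Proof.
move=> Ed /(exact_covered Ed) [x' [e [w [He E]]]].
exists x', e, (- w); split=> //.
by move: (congr1 (compm bpr1) E); rewrite !tomx_comp !bpr1_tomx compNm compmN.
Qed.

Lemma exact_mx2_covered (W1 W2 U V Z x : C) (g : Hom C W1 U) (q : Hom C W1 V)
  (h : Hom C W2 V) (d : Hom C (bip U V) Z) (a : Hom C x U) (b : Hom C x V) :
  exact_at (mx2 (- g) (0 : Hom C W2 U) q h) d -> d ⊚ tomx a b = 0 -> covered g a.
Proof.
move=> Ed /(exact_covered Ed) [x' [e [w [He E]]]].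
exists x', e, (- (bpr1 ⊚ w)); split=> //.
move: (congr1 (compm bpr1) E).
rewrite Defs.compA bpr1_mx2 tomx_comp bpr1_tomx [w]tomx_eta frommx_tomx comp0m addr0.
by rewrite compNm compmN -!tomx_eta.
Qed.

End Abelian.
End Additive.

Section Cone.
Variables (C : addCat) (HC : abelian C) (B : nat -> nat -> C).
Variable g : forall k l, Hom C (B k l.+1) (B k l).
Variable p : forall k l, Hom C (B k l) (B k.+1 l.+1).

Definition cone_d k j : Hom C (bip (B k j.+1) (B k.+1 j.+3)) (bip (B k j) (B k.+1 j.+2)) :=
  mx2 (- g k j) 0 (p k j.+1) (g k.+1 j.+2).

Lemma mchain_exact k l : exact_chain (mchain g p k l) ->
  (0 < l -> exact_at (cone_d k 0) (frommx (p k 0) (g k.+1 1))) /\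
  (forall j, j.+1 < l -> exact_at (cone_d k j.+1) (cone_d k j)).
Proof.
elim: l => [//|l IH] /= [Ehead /IH [Elast Etail]] {IH}.
case: l Ehead Elast Etail => [|l] /= Ehead Elast Etail; first by split=> // j.
split=> [_|j ltj]; first exact: Elast.
case: (ltnP j l) => [ltjl|lejl]; first exact: Etail.
by have -> : j = l by lia.
Qed.

(* The second component b is forced to vanish where the cone has the summand 0
   in place of B_{k+1}^{n+1}, resp. of B_{k+1}^2 when n = 1. *)
Definition cone_exact_last m k := forall x (a : Hom C x (B k 0)) (b : Hom C x (B k.+1 2)),
  (m = 0%N -> b = 0) -> p k 0 ⊚ a + g k.+1 1 ⊚ b = 0 -> covered (g k 0) a.

Definition cone_exact_at m k i := g k i ⊚ g k i.+1 = 0 /\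
  forall x (a : Hom C x (B k i.+1)) (b : Hom C x (B k.+1 i.+3)),
  (i.+1 = m -> b = 0) -> g k i ⊚ a = 0 -> p k i.+1 ⊚ a + g k.+1 i.+2 ⊚ b = 0 ->
  covered (g k i.+1) a.

Lemma cone_exact_at_mx2 m k i W (h : Hom C W (B k.+1 i.+3)) :
  exact_at (mx2 (- g k i.+1) (0 : Hom C W _) (p k i.+2) h) (cone_d k i) ->
  cone_exact_at m k i.
Proof.
move=> E; split=> [|x a b _ ga pb]; first exact: mx2_comp_eq0_ul (proj1 E).
apply: (exact_mx2_covered HC E (b := b)).
by rewrite mx2_tomx compNm ga oppr0 comp0m addr0 pb tomx00.
Qed.

Lemma cone_exact_top m k : exact_chain (cone_chain g p k m) ->
  forall i, i.+1 = m -> cone_exact_at m k i.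
Proof.
move=> + i im; subst m => /= [[E _]]; split=> [|x a b /(_ erefl) -> ga pb].
  exact: mx2_tomx_eq0_ul (proj1 E).
apply: (exact_tomx_covered HC E (b := 0 : Hom C x (zobj C))).
rewrite compm0 addr0 in pb.
by rewrite mx2_tomx compNm ga oppr0 !compm0 !addr0 pb tomx00.
Qed.

Lemma cone_exact m k : exact_chain (cone_chain g p k m) ->
  cone_exact_last m k /\ forall i, i < m -> cone_exact_at m k i.
Proof.
move=> Econe; split.
  move=> x a b b0 pab; move: Econe b0.
  case: m => [|[|m'']] /= [E1 [E2 E3]] b0.
  - apply: (exact_tomx_covered HC E1 (b := 0 : Hom C x (zobj C))).
    rewrite (b0 erefl) compm0 addr0 in pab.
    by rewrite frommx_tomx pab compm0 addr0.
  - by apply: (exact_mx2_covered HC E2 (b := b)); rewrite frommx_tomx.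
  - have [E3last _] := mchain_exact (l := m''.+1) E3.
    by apply: (exact_mx2_covered HC (E3last erefl) (b := b)); rewrite frommx_tomx.
move=> i; case: (ltnP i.+1 m) => [lti1 _|lei1 ltim]; last first.
  by apply: cone_exact_top => //; lia.
move: Econe lti1; case: m => [//|[//|m'']] /= [_ [E2 E3]] lti1.
have [_ E3int] := mchain_exact (l := m''.+1) E3.
case: (ltnP i.+1 m''.+1) => [lt|ge]; first exact: cone_exact_at_mx2 (E3int i lt).
have -> : i = m'' by lia.
exact: cone_exact_at_mx2 E2.
Qed.

Definition pg_covers m k := forall x (y : Hom C x (B k.+1 1)),
  exists x' (e : Hom C x' x) (a : Hom C x' (B k 0)) (b : Hom C x' (B k.+1 2)),
  epi e /\ (m = 0%N -> b = 0) /\ p k 0 ⊚ a + g k.+1 1 ⊚ b = y ⊚ e.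

Lemma epi_pgP m k : epi (pg g p k m) <-> pg_covers m k.
Proof.
case: m => [|m'] /=; split.
- move=> epg x y; have [x' [e [w [He E]]]] := epi_covers HC y epg.
  exists x', e, (bpr1 ⊚ w), 0; split=> //; split=> //.
  by rewrite -E frommx_comp !comp0m compm0.
- move=> H; apply: covers_epi => x y.
  have [x' [e [a [b [He [b0 E]]]]]] := H x y.
  exists x', e, (tomx a 0); split=> //.
  by rewrite frommx_tomx comp0m -E (b0 erefl) compm0.
- move=> epg x y; have [x' [e [w [He E]]]] := epi_covers HC y epg.
  by exists x', e, (bpr1 ⊚ w), (bpr2 ⊚ w); rewrite -E frommx_comp.
- move=> H; apply: covers_epi => x y.
  have [x' [e [a [b [He [_ E]]]]]] := H x y.
  by exists x', e, (tomx a b); rewrite frommx_tomx.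
Qed.

Lemma gchain_exact N l : exact_chain (gchain g N l) ->
  (0 < l -> exact_at (g N 0) (0 : Hom C (B N 0) (zobj C))) /\
  (forall j, j.+1 < l -> exact_at (g N j.+1) (g N j)).
Proof.
elim: l => [//|l IH] /= [Ehead /IH [Elast Etail]] {IH}.
case: l Ehead Elast Etail => [|l] /= Ehead Elast Etail; first by split=> // j.
split=> [_|j ltj]; first exact: Elast.
case: (ltnP j l) => [ltjl|lejl]; first exact: Etail.
by have -> : j = l by lia.
Qed.

End Cone.

Lemma fchain_exact (C : addCat) (B : nat -> nat -> C) (f : forall k, Hom C (B k 0) (B k.+1 0))
  r k : exact_chain (fchain f r.+1 k) <->
  (forall i, k <= i -> (i < k + r)%N -> exact_at (f i) (f i.+1)) /\
  exact_at (f (k + r)%N) (0 : Hom C (B (k + r)%N.+1 0) (zobj C)).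
Proof.
elim: r k => [|r IH] k.
  rewrite addn0 /=; split=> [[E _]|[_ E]] //; split=> // i ki ik; lia.
rewrite -addSnnS /=; split.
  move=> [Ek /IH [Eint Elast]]; split=> // i ki ik.
  case: (ltnP k i) => [lt|ge]; first exact: Eint.
  by have -> : i = k by lia.
move=> [Eint Elast]; split; first by apply: Eint => //; lia.
by apply/IH; split=> // i ki ik; apply: Eint; lia.
Qed.

Section Main.
Variables (C : addCat) (HC : abelian C) (m : nat) (B : nat -> nat -> C).
Variable f : forall k, Hom C (B k 0) (B k.+1 0).
Variable g : forall k l, Hom C (B k l.+1) (B k l).
Variable p : forall k l, Hom C (B k l) (B k.+1 l.+1).
Hypothesis Hf : forall k, k <= m.+1 -> f k = g k.+1 0 ⊚ p k 0.
Hypothesis Hc : forall k j, k <= m.+1 -> j.+1 <= m ->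
  g k.+1 j.+1 ⊚ p k j.+1 = p k j ⊚ g k j.
Hypothesis Hz : forall k, k <= m.+1 -> p k m ⊚ g k m = 0.
Hypothesis Ha : exact_chain (ccons (0 : Hom C (zobj C) (B m.+2 m.+1)) (gchain g m.+2 m.+1)).
Hypothesis Hb : forall k, k <= m.+1 ->
  mono (cone_d0 g k m) /\ exact_chain (cone_chain g p k m).

Lemma exact_last_column_top : exact_at (0 : Hom C (zobj C) (B m.+2 m.+1)) (g m.+2 m).
Proof. exact: proj1 Ha. Qed.

Lemma exact_last_column : exact_chain (gchain g m.+2 m.+1).
Proof. exact: proj2 Ha. Qed.

(* At the top degree j = m the lift z is required to be 0, which encodes that
   g_k^n is a monomorphism; B_k^{n+1} lies outside the diagram. *)
Definition column_exact k j := forall x (y : Hom C x (B k j.+1)), g k j ⊚ y = 0 ->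
  exists x' (e : Hom C x' x) (z : Hom C x' (B k j.+2)),
  epi e /\ g k j.+1 ⊚ z = y ⊚ e /\ (j = m -> z = 0).

Lemma column_exact_last j : j <= m -> column_exact m.+2 j.
Proof.
have [_ Eint] := gchain_exact exact_last_column.
rewrite leq_eqVlt => /orP [/eqP -> x y gy|ltj x y gy].
  have [x' [e [z [He E]]]] := exact_covered HC exact_last_column_top gy.
  by exists x', e, 0; rewrite compm0 -E comp0m; split=> //; split.
have [x' [e [z [He E]]]] := exact_covered HC (Eint j ltj) gy.
by exists x', e, z; split=> //; split=> //; move=> jm; rewrite jm ltnn in ltj.
Qed.

Lemma column_exact_top k : k <= m.+1 -> column_exact k m.
Proof.
move=> lek x y gy; have y0 : y = 0.
  apply: (proj1 (monoP _) (proj1 (Hb lek))).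
  by rewrite /cone_d0 tomx_comp compNm gy oppr0 comp0m tomx00.
exists x, (idm x), 0; rewrite compm0 y0 comp0m.
by split; [exact: epi_id | split].
Qed.

Lemma column_exact_shift k j : k <= m.+1 -> j < m ->
  column_exact k.+1 j.+1 -> column_exact k j.
Proof.
move=> lek ltj Ek1 x y gy.
have gpy : g k.+1 j.+1 ⊚ (p k j.+1 ⊚ y) = 0.
  by rewrite Defs.compA (Hc lek ltj) -Defs.compA gy compm0.
have [x1 [e1 [z1 [He1 [E1 z1m]]]]] := Ek1 x _ gpy.
have [_ Econe] := proj2 (cone_exact HC (proj2 (Hb lek))) j ltj.
have [x2 [e2 [c [He2 E2]]]] := Econe x1 (y ⊚ e1) (- z1)
  ltac:(by move/z1m ->; rewrite oppr0)
  ltac:(by rewrite Defs.compA gy comp0m)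
  ltac:(by rewrite compmN E1 Defs.compA subrr).
exists x2, (e1 ⊚ e2), c; split; first exact: epi_comp.
split; first by rewrite E2 -Defs.compA.
by move=> jm; rewrite jm ltnn in ltj.
Qed.

Lemma column_exact_all k j : k <= m.+2 -> j <= m -> column_exact k j.
Proof.
have [d] := ubnP (m - j); elim: d k j => [//|d IH] k j ltd lek lej.
case: (ltnP k m.+2) => [ltk|gek]; last first.
  by rewrite (_ : k = m.+2); [exact: column_exact_last | lia].
case: (ltnP j m) => [ltj|gej]; last first.
  by rewrite (_ : j = m); [exact: column_exact_top | lia].
by apply: column_exact_shift => //; apply: IH; lia.
Qed.

Lemma g_comp_g1 j : j <= m.+2 -> 0 < m -> g j 0 ⊚ g j 1 = 0.
Proof.
move=> lej mpos; case: (ltnP j m.+2) => [lt|ge].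
  exact: (proj1 (proj2 (cone_exact HC (proj2 (Hb lt))) 0 mpos)).
have -> : j = m.+2 by lia.
have [_ Eint] := gchain_exact exact_last_column.
exact: (proj1 (Eint 0%N ltac:(lia))).
Qed.

Lemma f_comp_g k : k <= m -> f k.+1 ⊚ g k.+1 0 = 0.
Proof.
move=> lek; rewrite (Hf (k := k.+1) lek) -Defs.compA.
case: (posnP m) => [m0|mpos].
  by move: (Hz (k := k.+1) lek); rewrite m0 => ->; rewrite compm0.
by rewrite -(Hc (k := k.+1) (j := 0) lek) // Defs.compA g_comp_g1 ?comp0m //; lia.
Qed.

Lemma ker_f_covered j x (y : Hom C x (B j 0)) : j <= m.+1 -> f j ⊚ y = 0 ->
  covered (g j 0) y.
Proof.
move=> lej fy.
have gpy : g j.+1 0 ⊚ (p j 0 ⊚ y) = 0 by rewrite Defs.compA -Hf.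
have [x1 [e1 [z1 [He1 [E1 z1m]]]]] := column_exact_all (k := j.+1) lej (leq0n _) gpy.
apply: (covered_comp_epi He1).
apply: (proj1 (cone_exact HC (proj2 (Hb lej))) x1 (y ⊚ e1) (- z1)).
  by move=> m0; rewrite z1m ?oppr0.
by rewrite compmN E1 Defs.compA subrr.
Qed.

Definition im_g_sub_im_f k :=
  forall x (y : Hom C x (B k.+1 1)), covered (f k) (g k.+1 0 ⊚ y).

Lemma pg_coversE k : k <= m.+1 -> pg_covers g p m k <-> im_g_sub_im_f k.
Proof.
move=> lek; split=> [H x y|H x y].
  have [x' [e [a [b [He [b0 E]]]]]] := H x y.
  exists x', e, a; split=> //.
  have ggb : g k.+1 0 ⊚ (g k.+1 1 ⊚ b) = 0.
    case: (posnP m) => [m0|mpos]; first by rewrite (b0 m0) !compm0.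
    by rewrite Defs.compA g_comp_g1 ?comp0m.
  by rewrite (Hf lek) -!Defs.compA -E compDr ggb addr0.
have [x1 [e1 [z [He1 E1]]]] := H x y.
have gy : g k.+1 0 ⊚ (y ⊚ e1 - p k 0 ⊚ z) = 0.
  by rewrite compBr !Defs.compA -(Hf lek) E1 subrr.
have [x2 [e2 [z2 [He2 [E2 z2m]]]]] := column_exact_all (k := k.+1) lek (leq0n _) gy.
exists x2, (e1 ⊚ e2), (z ⊚ e2), z2; split; first exact: epi_comp.
by split=> [m0|]; [exact: z2m | rewrite E2 compBl !Defs.compA addrC subrK].
Qed.

Lemma exact_fE k : k <= m -> exact_at (f k) (f k.+1) <-> im_g_sub_im_f k.
Proof.
move=> lek; split=> [E x y|H].
  by apply: (exact_covered HC E); rewrite Defs.compA f_comp_g ?comp0m.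
apply: exact_at_covered => [|x y fy].
  by rewrite (Hf (leqW lek)) Defs.compA f_comp_g ?comp0m.
have [x1 [e1 [c [He1 E1]]]] := ker_f_covered (j := k.+1) lek fy.
by apply: (covered_comp_epi He1); rewrite -E1; exact: H.
Qed.

Lemma exact_f_lastE : exact_at (f m.+1) (0 : Hom C (B m.+2 0) (zobj C)) <->
  im_g_sub_im_f m.+1.
Proof.
split=> [E x y|H]; first by apply: (exact_covered HC E); rewrite comp0m.
apply: exact_at_covered => [|x y _]; first by rewrite comp0m.
have [Eg1 _] := gchain_exact exact_last_column.
have [x1 [e1 [c [He1 E1]]]] := exact_covered HC (Eg1 erefl) (comp0m _ y).
by apply: (covered_comp_epi He1); rewrite -E1; exact: H.
Qed.

Lemma row_exact_iff_pg_epi :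
  exact_chain (fchain f m.+2 0) <-> forall k, k <= m.+1 -> epi (pg g p k m).
Proof.
have pg_epiE k : k <= m.+1 -> epi (pg g p k m) <-> im_g_sub_im_f k.
  by move=> lek; rewrite (epi_pgP HC) (pg_coversE lek).
rewrite (fchain_exact f m.+1 0); split=> [[Eint Elast] k lek|H].
  apply/(pg_epiE k lek); case: (ltnP k m.+1) => [lt|ge].
    by apply/(exact_fE lt)/Eint.
  by rewrite (_ : k = m.+1); [exact/exact_f_lastE | lia].
split=> [i _ lti|]; first by apply/(exact_fE lti)/(pg_epiE i (ltnW lti))/H; lia.
exact/exact_f_lastE/(pg_epiE _ (leqnn _))/H.
Qed.

End Main.

Local Close Scope ring_scope.

Theorem mainTheorem2 (C : addCat) (HC : abelian C) (n : nat) (hn : 1 <= n)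
  (B : nat -> nat -> C)
  (f : forall k, Hom C (B k 0) (B k.+1 0))
  (g : forall k l, Hom C (B k l.+1) (B k l))
  (p : forall k l, Hom C (B k l) (B k.+1 l.+1)) :
  (* f^k = g_{k+1}^1 p^k *)
  (forall k, k <= n -> f k = compm (g k.+1 0) (p k 0)) ->
  (* g_{k+1}^{l+1} p_k^l = p_k^{l-1} g_k^l  for 1 <= l = j+1 <= n-1 *)
  (forall k j, k <= n -> j.+1 <= n.-1 ->
     compm (g k.+1 j.+1) (p k j.+1) = compm (p k j) (g k j)) ->
  (* p_k^{n-1} g_k^n = 0 *)
  (forall k, k <= n -> compm (p k n.-1) (g k n.-1) = 0%R) ->
  (* (a) 0 -> B_{n+1}^n -> ... -> B_{n+1}^1 -> A^{n+1} -> 0 exact *)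
  exact_chain (ccons (0%R : Hom C (zobj C) (B n.+1 n)) (gchain g n.+1 n)) ->
  (* (b) the mapping cones *)
  (forall k, k <= n ->
     mono (cone_d0 g k n.-1) /\ exact_chain (cone_chain g p k n.-1)) ->
  (exact_chain (fchain f n.+1 0) <-> forall k, k <= n -> epi (pg g p k n.-1)).
Proof.
case: n hn => [//|m] _ Hf Hc Hz Ha Hb.
exact: (row_exact_iff_pg_epi HC Hf Hc Hz Ha Hb).
Qed.
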